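(* Let $\Gamma=(V,E)$ be a reflexive, locally finite, $k$-separable graph, and assume that either $V$ is infinite or $\alpha_k(\Gamma)\le\alpha_{-k}(\Gamma)$. Let $A$ be a $k$-atom of $\Gamma$ and let $F$ be a $k$-fragment of $\Gamma$ with $|A\cap F|\ge k$. Then $A\subseteq F$. In particular, two distinct $k$-atoms of $\Gamma$ intersect in at most $k-1$ elements.
   Context: A graph is a pair $\Gamma=(V,E)$ with $E\subseteq V\times V$; reflexive means $(x,x)\in E$ for all $x$; locally finite means each $\Gamma(x)=\{y:(x,y)\in E\}$ is finite. For $A\subseteq V$: $\Gamma(A)=\bigcup_{x\in A}\Gamma(x)$, $\partial(A)=\Gamma(A)\setminus A$. $\Gamma^{-1}=(V,E^{-1})$ is the reverse graph. $\Gamma$ is $k$-separable if some finite $X$ has $|X|\ge k$ and $|V\setminus\Gamma(X)|\ge k$; then $\kappa_k(\Gamma)=\min\{|\partial(X)|: X\text{ finite}, |X|\ge k, |V\setminus\Gamma(X)|\ge k\}$, a $k$-fragment is a finite $X$ with $|X|\ge k$, $|V\setminus\Gamma(X)|\ge k$ and $|\partial(X)|=\kappa_k(\Gamma)$, a $k$-atom is a $k$-fragment of minimum cardinality, and $\alpha_k(\Gamma)$ is the cardinality of a $k$-atom. $\alpha_{-k}(\Gamma)=\alpha_k(\Gamma^{-1})$. *)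

From Stdlib Require Export Ensembles Finite_sets.

Section Graphs.
Variable V : Type.
Variable E : V -> V -> Prop.

Definition reflexive_graph : Prop := forall x, E x x.

Definition nbhd (x : V) : Ensemble V := fun y => E x y.

Definition locally_finite : Prop := forall x, Finite V (nbhd x).

Definition Gam (A : Ensemble V) : Ensemble V :=
  fun y => exists x, In V A x /\ E x y.

Definition bdry (A : Ensemble V) : Ensemble V := Setminus V (Gam A) A.

Definition coGam (A : Ensemble V) : Ensemble V := Complement V (Gam A).

(* |S| >= k, for a possibly infinite S *)
Definition atleast (k : nat) (S : Ensemble V) : Prop :=
  exists B, Included V B S /\ cardinal V B k.

Definition admissible (k : nat) (X : Ensemble V) : Prop :=
  Finite V X /\ atleast k X /\ atleast k (coGam X).

Definition separable (k : nat) : Prop := exists X, admissible k X.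

Definition is_kappa (k n : nat) : Prop :=
  (exists X, admissible k X /\ cardinal V (bdry X) n) /\
  (forall Y m, admissible k Y -> cardinal V (bdry Y) m -> n <= m).

Definition fragment (k : nat) (X : Ensemble V) : Prop :=
  admissible k X /\ exists n, is_kappa k n /\ cardinal V (bdry X) n.

Definition atom (k : nat) (A : Ensemble V) : Prop :=
  fragment k A /\
  forall F a f, fragment k F -> cardinal V A a -> cardinal V F f -> a <= f.

Definition is_alpha (k n : nat) : Prop :=
  exists A, atom k A /\ cardinal V A n.

End Graphs.

Arguments reflexive_graph {V} E.
Arguments locally_finite {V} E.
Arguments separable {V} E k.
Arguments fragment {V} E k X.
Arguments atom {V} E k A.
Arguments is_alpha {V} E k n.
Arguments atleast {V} k S.

Definition rev_graph {V : Type} (E : V -> V -> Prop) : V -> V -> Prop :=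
  fun x y => E y x.

From Stdlib Require Import Ensembles Finite_sets Finite_sets_facts Classical Lia.

(* The proof rests on submodularity of the boundary: since Γ(A∪F) = Γ(A)∪Γ(F),
   Γ(A∩F) ⊆ Γ(A)∩Γ(F) and |Γ(X)| = |X| + |∂X| for a reflexive graph,
   |∂(A∩F)| + |∂(A∪F)| ≤ |∂A| + |∂F|.  Hence if A, F are k-fragments and both A∩F
   and A∪F are admissible, both boundaries are at least κ_k and so A∩F is again a
   k-fragment; for an atom A this forces A∩F = A.  Admissibility of A∩F is the
   hypothesis |A∩F| ≥ k; admissibility of A∪F, i.e. |V∖Γ(A∪F)| ≥ k, is where the
   case hypothesis enters: it is automatic for infinite V, and for finite V it
   follows from |V∖Γ(F)| ≥ α_{-k} ≥ α_k, because V∖Γ(F) is a k-fragment of the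
   reverse graph (duality X ↦ V∖Γ(X) between fragments of Γ and of Γ^{-1}). *)

Lemma Union_iff (U : Type) (X Y : Ensemble U) x : Union U X Y x <-> X x \/ Y x.
Proof. split; [intros []; auto | intros [h|h]; [left|right]; exact h]. Qed.

Lemma Intersection_iff (U : Type) (X Y : Ensemble U) x : Intersection U X Y x <-> X x /\ Y x.
Proof. split; [intros []; auto | intros [h h']; split; assumption]. Qed.

Lemma Singleton_iff (U : Type) (y x : U) : Singleton U y x <-> y = x.
Proof. split; [intros []; reflexivity | intros <-; constructor]. Qed.

Lemma Empty_set_iff (U : Type) (x : U) : Empty_set U x <-> False.
Proof. split; intros []. Qed.

Ltac set_unfold :=
  unfold Add, Setminus, Complement, Included, In in *;
  repeat rewrite ?Union_iff, ?Intersection_iff, ?Singleton_iff, ?Empty_set_iff in *.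

Ltac set_solve :=
  apply Extensionality_Ensembles; split; intros ?z ?Hz; set_unfold;
  intuition (subst; firstorder).

Section Cardinals.
Variable U : Type.

Lemma cardinal_split (X C : Ensemble U) n : cardinal U X n ->
  exists a b, cardinal U (Intersection U X C) a /\ cardinal U (Setminus U X C) b /\ n = a + b.
Proof.
  induction 1 as [|A n _ IH y Hy].
  - exists 0, 0.
    replace (Intersection U (Empty_set U) C) with (Empty_set U) by set_solve.
    replace (Setminus U (Empty_set U) C) with (Empty_set U) by set_solve.
    repeat split; constructor.
  - destruct IH as [a [b [Ha [Hb ->]]]].
    destruct (classic (In U C y)) as [HyC|HyC].
    + exists (S a), b. split; [|split; [|lia]].
      * replace (Intersection U (Add U A y) C) with (Add U (Intersection U A C) y)
          by set_solve.
        constructor; [exact Ha|]. set_unfold; tauto.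
      * replace (Setminus U (Add U A y) C) with (Setminus U A C)
          by set_solve.
        exact Hb.
    + exists a, (S b). split; [|split; [|lia]].
      * replace (Intersection U (Add U A y) C) with (Intersection U A C)
          by set_solve.
        exact Ha.
      * replace (Setminus U (Add U A y) C) with (Add U (Setminus U A C) y)
          by set_solve.
        constructor; [exact Hb|]. set_unfold; tauto.
Qed.

Lemma cardinal_included_split (X C : Ensemble U) n c :
  Included U C X -> cardinal U X n -> cardinal U C c ->
  exists d, cardinal U (Setminus U X C) d /\ n = c + d.
Proof.
  intros HCX HX HC.
  destruct (cardinal_split X C n HX) as [c' [d [Hc' [Hd ->]]]].
  replace (Intersection U X C) with C in Hc' by set_solve.
  rewrite (cardinal_unicity U C c HC c' Hc'). eauto.
Qed.

Lemma cardinal_union_intersection (X Y : Ensemble U) a b c d :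
  cardinal U X a -> cardinal U Y b ->
  cardinal U (Union U X Y) c -> cardinal U (Intersection U X Y) d -> c + d = a + b.
Proof.
  intros HX HY HXY HI.
  destruct (cardinal_included_split (Union U X Y) X c a) as [e [He ->]];
    [intros z Hz; left; exact Hz | exact HXY | exact HX |].
  destruct (cardinal_split Y X b HY) as [d' [e' [Hd' [He' ->]]]].
  replace (Setminus U (Union U X Y) X) with (Setminus U Y X) in He by set_solve.
  replace (Intersection U Y X) with (Intersection U X Y) in Hd' by set_solve.
  rewrite (cardinal_unicity U _ _ He _ He'), (cardinal_unicity U _ _ HI _ Hd'). lia.
Qed.

Lemma included_cardinal_eq (X Y : Ensemble U) a b :
  Included U X Y -> cardinal U X a -> cardinal U Y b -> b <= a -> X = Y.
Proof.
  intros HXY HX HY Hba.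
  destruct (Included_Strict_Included U X Y HXY) as [Hstrict|]; [|assumption].
  pose proof (incl_st_card_lt U X a HX Y b HY Hstrict). lia.
Qed.

Lemma atleast_cardinal_le k (X : Ensemble U) n : atleast k X -> cardinal U X n -> k <= n.
Proof. intros [B [HBX HB]] HX. exact (incl_card_le U B X k n HB HX HBX). Qed.

Lemma cardinal_atleast (X : Ensemble U) n : cardinal U X n -> forall k, k <= n -> atleast k X.
Proof.
  induction 1 as [|A n HA IH y Hy]; intros k Hk.
  - replace k with 0 by lia. exists (Empty_set U). split; [intros z []|constructor].
  - destruct (Nat.eq_dec k (S n)) as [->|Hne].
    + exists (Add U A y). split; [intros z Hz; exact Hz | constructor; assumption].
    + destruct (IH k ltac:(lia)) as [B [HBA HB]].
      exists B. split; [intros z Hz; left; apply HBA, Hz | exact HB].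
Qed.

Lemma atleast_monotone k (X Y : Ensemble U) : Included U X Y -> atleast k X -> atleast k Y.
Proof. intros HXY [B [HBX HB]]. exists B. split; [intros z Hz; apply HXY, HBX, Hz | exact HB]. Qed.

Lemma atleast_complement_infinite k (X : Ensemble U) :
  ~ Finite U (Full_set U) -> Finite U X -> atleast k (Complement U X).
Proof.
  intros Hinf HX. induction k as [|k [B [HBX HB]]].
  - exists (Empty_set U). split; [intros z []|constructor].
  - assert (Hfresh : exists x, ~ In U (Union U X B) x).
    { apply NNPP. intro Hnone. apply Hinf.
      apply Finite_downward_closed with (Union U X B).
      - apply Union_preserves_Finite; [exact HX | exact (cardinal_finite U B k HB)].
      - intros z _. apply NNPP. intro Hz. apply Hnone. exists z. exact Hz. }
    destruct Hfresh as [x Hx]. set_unfold.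
    exists (Add U B x). split.
    + intros z Hz. set_unfold. destruct Hz as [Hz|<-]; [apply HBX, Hz | tauto].
    + constructor; [exact HB|]. set_unfold. tauto.
Qed.

End Cardinals.

Section Neighbourhoods.
Variables (V : Type) (G : V -> V -> Prop).

Lemma Gam_monotone X Y : Included V X Y -> Included V (Gam V G X) (Gam V G Y).
Proof. intros HXY z [x [Hx Hxz]]. exists x. split; [apply HXY, Hx | exact Hxz]. Qed.

Lemma coGam_antitone X Y : Included V X Y -> Included V (coGam V G Y) (coGam V G X).
Proof. intros HXY z HzY HzX. apply HzY. exact (Gam_monotone X Y HXY z HzX). Qed.

Lemma Gam_union X Y : Gam V G (Union V X Y) = Union V (Gam V G X) (Gam V G Y).
Proof.
  apply Extensionality_Ensembles. split.
  - intros z [x [[x' Hx|x' Hx] Hxz]]; [left|right]; exists x'; split; assumption.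
  - intros z [z' [x [Hx Hxz]]|z' [x [Hx Hxz]]];
      exists x; split; [left|exact Hxz|right|exact Hxz]; exact Hx.
Qed.

Lemma Gam_singleton x : Gam V G (Singleton V x) = nbhd V G x.
Proof.
  apply Extensionality_Ensembles. split.
  - intros z [y [[] Hxz]]. exact Hxz.
  - intros z Hxz. exists x. split; [constructor | exact Hxz].
Qed.

Lemma Gam_finite X : locally_finite G -> Finite V X -> Finite V (Gam V G X).
Proof.
  intros Hlf. induction 1 as [|A _ IH x _].
  - replace (Gam V G (Empty_set V)) with (Empty_set V); [constructor|].
    apply Extensionality_Ensembles. split; [intros z []|intros z [x [[] _]]].
  - unfold Add. rewrite Gam_union, Gam_singleton.
    exact (Union_preserves_Finite V _ _ IH (Hlf x)).
Qed.

Lemma bdry_finite X : locally_finite G -> Finite V X -> Finite V (bdry V G X).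
Proof.
  intros Hlf HX. apply Finite_downward_closed with (Gam V G X); [now apply Gam_finite|].
  intros z [Hz _]. exact Hz.
Qed.

(* In a reflexive graph X ⊆ Γ(X), hence |Γ(X)| = |X| + |∂X|. *)
Lemma cardinal_Gam X a p g : reflexive_graph G ->
  cardinal V X a -> cardinal V (bdry V G X) p -> cardinal V (Gam V G X) g -> g = a + p.
Proof.
  intros Hrefl HX Hp Hg.
  destruct (cardinal_included_split V (Gam V G X) X g a) as [d [Hd ->]]; try assumption.
  - intros x Hx. exists x. split; [exact Hx | apply Hrefl].
  - rewrite (cardinal_unicity V _ _ Hp _ Hd). reflexivity.
Qed.

Lemma bdry_submodular A F bA bF bP bQ : reflexive_graph G -> locally_finite G ->
  Finite V A -> Finite V F ->
  cardinal V (bdry V G A) bA -> cardinal V (bdry V G F) bF ->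
  cardinal V (bdry V G (Intersection V A F)) bP ->
  cardinal V (bdry V G (Union V A F)) bQ ->
  bP + bQ <= bA + bF.
Proof.
  intros Hrefl Hlf HA HF HbA HbF HbP HbQ.
  assert (HP : Finite V (Intersection V A F)) by now apply Intersection_preserves_finite.
  assert (HQ : Finite V (Union V A F)) by now apply Union_preserves_Finite.
  assert (HGI : Finite V (Intersection V (Gam V G A) (Gam V G F)))
    by now apply Intersection_preserves_finite, Gam_finite.
  destruct (finite_cardinal V _ HA) as [a Ha].
  destruct (finite_cardinal V _ HF) as [f Hf].
  destruct (finite_cardinal V _ HP) as [p Hp].
  destruct (finite_cardinal V _ HQ) as [q Hq].
  destruct (finite_cardinal V _ (Gam_finite A Hlf HA)) as [gA HgA].
  destruct (finite_cardinal V _ (Gam_finite F Hlf HF)) as [gF HgF].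
  destruct (finite_cardinal V _ (Gam_finite _ Hlf HP)) as [gP HgP].
  destruct (finite_cardinal V _ (Gam_finite _ Hlf HQ)) as [gQ HgQ].
  destruct (finite_cardinal V _ HGI) as [gI HgI].
  assert (Hsizes : q + p = a + f) by exact (cardinal_union_intersection V A F a f q p Ha Hf Hq Hp).
  assert (Hnbhds : gQ + gI = gA + gF).
  { rewrite Gam_union in HgQ. exact (cardinal_union_intersection V _ _ _ _ _ _ HgA HgF HgQ HgI). }
  assert (HgPI : gP <= gI).
  { apply (incl_card_le V _ _ _ _ HgP HgI). intros z Hz.
    split; revert Hz; apply Gam_monotone; intros x [x' HxA HxF]; assumption. }
  pose proof (cardinal_Gam A a bA gA Hrefl Ha HbA HgA).
  pose proof (cardinal_Gam F f bF gF Hrefl Hf HbF HgF).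
  pose proof (cardinal_Gam _ p bP gP Hrefl Hp HbP HgP).
  pose proof (cardinal_Gam _ q bQ gQ Hrefl Hq HbQ HgQ).
  lia.
Qed.

End Neighbourhoods.

Section Fragments.
Variables (V : Type) (G : V -> V -> Prop) (k : nat).

(* A subset of an admissible set with at least k elements is admissible:
   shrinking X only enlarges V∖Γ(X). *)
Lemma admissible_shrink X Y :
  admissible V G k X -> Included V Y X -> atleast k Y -> admissible V G k Y.
Proof.
  intros [HX [_ HcoX]] HYX HY. split; [|split; [exact HY|]].
  - exact (Finite_downward_closed V X HX Y HYX).
  - exact (atleast_monotone V k _ _ (coGam_antitone V G Y X HYX) HcoX).
Qed.

Lemma kappa_unique n m : is_kappa V G k n -> is_kappa V G k m -> n = m.
Proof.
  intros [[X [HX HXn]] Hn] [[Y [HY HYm]] Hm].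
  pose proof (Hn Y m HY HYm). pose proof (Hm X n HX HXn). lia.
Qed.

(* If A, F are k-fragments, |A∩F| ≥ k and |V∖Γ(A∪F)| ≥ k, then A∩F is a
   k-fragment: both ∂(A∩F) and ∂(A∪F) are at least κ_k, while their sum is at
   most 2κ_k by submodularity. *)
Lemma fragment_intersection A F : reflexive_graph G -> locally_finite G ->
  fragment G k A -> fragment G k F ->
  atleast k (Intersection V A F) -> atleast k (coGam V G (Union V A F)) ->
  fragment G k (Intersection V A F).
Proof.
  intros Hrefl Hlf [HA [n [Hn HbA]]] [HF [n' [Hn' HbF]]] HP HcoQ.
  rewrite <- (kappa_unique n n' Hn Hn') in HbF.
  assert (HPadm : admissible V G k (Intersection V A F)).
  { apply (admissible_shrink A); [exact HA | intros z [z' Hz _]; exact Hz | exact HP]. }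
  assert (HQadm : admissible V G k (Union V A F)).
  { destruct HA as [HAfin [HAk _]], HF as [HFfin _].
    split; [now apply Union_preserves_Finite | split; [|exact HcoQ]].
    apply (atleast_monotone V k A); [intros z Hz; left; exact Hz | exact HAk]. }
  destruct (finite_cardinal V _ (bdry_finite V G _ Hlf (proj1 HPadm))) as [bP HbP].
  destruct (finite_cardinal V _ (bdry_finite V G _ Hlf (proj1 HQadm))) as [bQ HbQ].
  pose proof (proj2 Hn _ _ HPadm HbP). pose proof (proj2 Hn _ _ HQadm HbQ).
  pose proof (bdry_submodular V G A F n n bP bQ Hrefl Hlf (proj1 HA) (proj1 HF)
                HbA HbF HbP HbQ).
  split; [exact HPadm|]. exists n. split; [exact Hn|].
  replace n with bP by lia. exact HbP.
Qed.

(* For an admissible P ⊆ A, with A of boundary κ_k: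
   |Γ(A) ∖ Γ(P)| = |A| + κ_k - |P| - |∂P| ≤ |A| - k. *)
Lemma Gam_difference_small A P n a d : reflexive_graph G -> locally_finite G ->
  is_kappa V G k n -> cardinal V (bdry V G A) n -> cardinal V A a ->
  admissible V G k P -> Included V P A ->
  cardinal V (Setminus V (Gam V G A) (Gam V G P)) d -> d + k <= a.
Proof.
  intros Hrefl Hlf Hn HbA Ha HP HPA Hd.
  destruct (finite_cardinal V _ (proj1 HP)) as [p Hp].
  destruct (finite_cardinal V _ (bdry_finite V G P Hlf (proj1 HP))) as [bP HbP].
  destruct (finite_cardinal V _ (Gam_finite V G P Hlf (proj1 HP))) as [gP HgP].
  destruct (finite_cardinal V _ (Gam_finite V G A Hlf (cardinal_finite V A a Ha))) as [gA HgA].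
  destruct (cardinal_included_split V (Gam V G A) (Gam V G P) gA gP) as [d' [Hd' HgAP]];
    [now apply Gam_monotone | exact HgA | exact HgP |].
  rewrite (cardinal_unicity V _ _ Hd _ Hd').
  pose proof (cardinal_Gam V G A a n gA Hrefl Ha HbA HgA).
  pose proof (cardinal_Gam V G P p bP gP Hrefl Hp HbP HgP).
  pose proof (proj2 Hn P bP HP HbP).
  pose proof (atleast_cardinal_le V k P p (proj1 (proj2 HP)) Hp).
  lia.
Qed.

(* The intersection property, given that A∪F is admissible: A∩F is a fragment
   contained in the atom A, hence equal to it. *)
Lemma atom_included_in_fragment A F : reflexive_graph G -> locally_finite G ->
  atom G k A -> fragment G k F ->
  atleast k (Intersection V A F) -> atleast k (coGam V G (Union V A F)) ->
  Included V A F.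
Proof.
  intros Hrefl Hlf [HAfrag HAmin] HF HP HcoQ.
  pose proof (fragment_intersection A F Hrefl Hlf HAfrag HF HP HcoQ) as HPfrag.
  destruct (finite_cardinal V _ (proj1 (proj1 HAfrag))) as [a Ha].
  destruct (finite_cardinal V _ (proj1 (proj1 HPfrag))) as [p Hp].
  assert (HPA : Intersection V A F = A).
  { apply (included_cardinal_eq V _ _ p a); [intros z [z' Hz _]; exact Hz | exact Hp | exact Ha |].
    exact (HAmin _ a p HPfrag Ha Hp). }
  rewrite <- HPA. intros z [z' _ Hz]. exact Hz.
Qed.

Lemma atom_included_atom A B :
  atom G k A -> atom G k B -> Included V A B -> Same_set V A B.
Proof.
  intros [HAfrag _] [HBfrag HBmin] HAB.
  destruct (finite_cardinal V _ (proj1 (proj1 HAfrag))) as [a Ha].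
  destruct (finite_cardinal V _ (proj1 (proj1 HBfrag))) as [b Hb].
  rewrite (included_cardinal_eq V A B a b HAB Ha Hb (HBmin A b a HAfrag Hb Ha)).
  split; intros z Hz; exact Hz.
Qed.

End Fragments.

Section Duality.
Variable V : Type.
Hypothesis Hfin : Finite V (Full_set V).

Lemma finite_any X : Finite V X.
Proof. apply (Finite_downward_closed V _ Hfin). intros z _. constructor. Qed.

(* The duality X ↦ V∖Γ(X): it maps Γ-admissible sets to Γ^{-1}-admissible sets
   (X ⊆ V∖Γ^{-1}(V∖Γ(X))) and does not enlarge the boundary. *)
Lemma complement_admissible_reverse (G : V -> V -> Prop) k X : admissible V G k X ->
  admissible V (rev_graph G) k (coGam V G X) /\
  Included V (bdry V (rev_graph G) (coGam V G X)) (bdry V G X).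
Proof.
  intros [_ [HXk HcoXk]]. split; [split; [apply finite_any | split; [exact HcoXk|]]|].
  - apply (atleast_monotone V k X); [|exact HXk].
    intros x Hx [y [Hy Hxy]]. apply Hy. exists x. split; [exact Hx | exact Hxy].
  - intros z [[y [Hy Hzy]] Hz]. split.
    + apply NNPP. exact Hz.
    + intro HzX. apply Hy. exists z. split; [exact HzX | exact Hzy].
Qed.

(* Consequently κ_k(Γ^{-1}) = κ_k(Γ) for finite V (the lower bound applies the
   duality to Γ^{-1}, whose reverse is Γ). *)
Lemma kappa_reverse (G : V -> V -> Prop) k n : is_kappa V G k n -> is_kappa V (rev_graph G) k n.
Proof.
  intros [[X [HX HXn]] Hmin].
  assert (Hlower : forall Y m, admissible V (rev_graph G) k Y ->
            cardinal V (bdry V (rev_graph G) Y) m -> n <= m).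
  { intros Y m HY HYm.
    destruct (complement_admissible_reverse (rev_graph G) k Y) as [HY' Hincl];
      [exact HY|].
    destruct (finite_cardinal V _ (finite_any (bdry V G (coGam V (rev_graph G) Y))))
      as [m' Hm'].
    pose proof (Hmin _ m' HY' Hm'). pose proof (incl_card_le V _ _ _ _ Hm' HYm Hincl). lia. }
  split; [|exact Hlower].
  destruct (complement_admissible_reverse G k X HX) as [HX' Hincl].
  destruct (finite_cardinal V _ (finite_any (bdry V (rev_graph G) (coGam V G X)))) as [m Hm].
  pose proof (Hlower _ m HX' Hm). pose proof (incl_card_le V _ _ _ _ Hm HXn Hincl).
  exists (coGam V G X). split; [exact HX'|]. replace n with m by lia. exact Hm.
Qed.

Lemma fragment_complement_reverse (G : V -> V -> Prop) k F : fragment G k F -> fragment (rev_graph G) k (coGam V G F).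
Proof.
  intros [HF [n [Hn HFn]]].
  destruct (complement_admissible_reverse G k F HF) as [HF' Hincl].
  pose proof (kappa_reverse G k n Hn) as Hn'.
  destruct (finite_cardinal V _ (finite_any (bdry V (rev_graph G) (coGam V G F)))) as [m Hm].
  pose proof (proj2 Hn' _ m HF' Hm). pose proof (incl_card_le V _ _ _ _ Hm HFn Hincl).
  split; [exact HF'|]. exists n. split; [exact Hn'|]. replace n with m by lia. exact Hm.
Qed.

End Duality.

(* For finite V: V∖Γ(A∪F) = (V∖Γ(F)) ∖ Γ(A), where
   |V∖Γ(F)| ≥ α_{-k} ≥ α_k ≥ |A| and (V∖Γ(F)) ∩ Γ(A) ⊆ Γ(A) ∖ Γ(A∩F) has at
   most |A| - k elements. *)
Lemma union_complement_large (V : Type) (G : V -> V -> Prop) k A F :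
  reflexive_graph G -> locally_finite G ->
  (~ Finite V (Full_set V) \/
   exists a b, is_alpha G k a /\ is_alpha (rev_graph G) k b /\ a <= b) ->
  atom G k A -> fragment G k F -> atleast k (Intersection V A F) ->
  atleast k (coGam V G (Union V A F)).
Proof.
  intros Hrefl Hlf Hcase [HAfrag HAmin] HF HP.
  destruct (classic (Finite V (Full_set V))) as [Hfin|Hinf].
  2:{ apply atleast_complement_infinite; [exact Hinf|].
      apply Gam_finite; [exact Hlf|].
      apply Union_preserves_Finite; [exact (proj1 (proj1 HAfrag)) | exact (proj1 (proj1 HF))]. }
  destruct Hcase as [Hinf|[a0 [b0 [[A0 [HA0 Ha0]] [[B0 [HB0 Hb0]] Hab]]]]]; [contradiction|].
  replace (coGam V G (Union V A F)) with (Setminus V (coGam V G F) (Gam V G A))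
    by (unfold coGam; rewrite Gam_union; set_solve).
  destruct (finite_cardinal V A (finite_any V Hfin A)) as [a Ha].
  destruct (finite_cardinal V _ (finite_any V Hfin (coGam V G F))) as [c Hc].
  assert (HaC : a <= c).
  { pose proof (HAmin A0 a a0 (proj1 HA0) Ha Ha0).
    pose proof (proj2 HB0 _ b0 c (fragment_complement_reverse V Hfin G k F HF) Hb0 Hc).
    lia. }
  destruct (cardinal_split V _ (Gam V G A) c Hc) as [i [e [Hi [He ->]]]].
  destruct HAfrag as [HAadm [n [Hn HbA]]].
  destruct (finite_cardinal V _ (finite_any V Hfin
              (Setminus V (Gam V G A) (Gam V G (Intersection V A F))))) as [d Hd].
  assert (Hid : i <= d).
  { apply (incl_card_le V _ _ _ _ Hi Hd). intros z [z' Hz HzA]. split; [exact HzA|].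
    intro HzP. apply Hz. revert HzP. apply Gam_monotone. intros x [x' _ HxF]. exact HxF. }
  assert (HPA : Included V (Intersection V A F) A) by (intros z [z' Hz _]; exact Hz).
  pose proof (Gam_difference_small V G k A _ n a d Hrefl Hlf Hn HbA Ha
                (admissible_shrink V G k A _ HAadm HPA HP) HPA Hd).
  apply (cardinal_atleast V _ e He). lia.
Qed.

Theorem mainTheorem4 (V : Type) (E : V -> V -> Prop) (k : nat)
  (Hrefl : reflexive_graph E) (Hlf : locally_finite E) (Hsep : separable E k)
  (Hcase : ~ Finite V (Full_set V) \/
           exists a b, is_alpha E k a /\ is_alpha (rev_graph E) k b /\ a <= b) :
  (forall A F, atom E k A -> fragment E k F ->
     atleast k (Intersection V A F) -> Included V A F) /\
  (forall A B, atom E k A -> atom E k B -> ~ Same_set V A B ->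
     forall n, cardinal V (Intersection V A B) n -> n <= k - 1).
Proof.
  assert (Hinside : forall A F, atom E k A -> fragment E k F ->
            atleast k (Intersection V A F) -> Included V A F).
  { intros A F HA HF HP.
    apply (atom_included_in_fragment V E k A F Hrefl Hlf HA HF HP).
    exact (union_complement_large V E k A F Hrefl Hlf Hcase HA HF HP). }
  split; [exact Hinside|].
  intros A B HA HB Hdistinct n Hn.
  destruct (Nat.le_gt_cases k n) as [Hkn|Hnk]; [exfalso|lia].
  apply Hdistinct, (atom_included_atom V E k A B HA HB).
  exact (Hinside A B HA (proj1 HB) (cardinal_atleast V _ n Hn k Hkn)).
Qed.
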